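(* Let $K$ be a field of characteristic $0$. Let $m=(x_1\cdots x_n)^{\alpha}$ and let $f\in K[x_1,\ldots,x_n]$ be a homogeneous polynomial of degree $d=n\alpha$. The following two properties are equivalent: (i) $m(A.x)=c\cdot f(x)$ for some invertible matrix $A\in GL_n(K)$ and some constant $c\in K$; (ii) the Lie algebra $\mathfrak{g}_f$ has a basis made of $n-1$ diagonalizable matrices of trace zero which pairwise commute. Moreover, $f$ is a constant multiple of $m$ if and only if $\mathfrak{g}_f$ is the space of diagonal $n\times n$ matrices of trace zero.
   Context: For $P\in K[x_1,\ldots,x_n]$, the Lie algebra $\mathfrak{g}_P$ of $P$ is the Lie algebra (tangent space at the identity) of the group of invariants $\{A\in GL_n(K): P(A.x)=P(x)\}$; equivalently, $\mathfrak{g}_P$ is the linear subspace of matrices $A=(a_{ij})\in M_n(K)$ such that $\sum_{i,j\in[n]} a_{ij}\,x_j\,\frac{\partial P}{\partial x_i}=0$. $P(A.x)$ denotes the polynomial obtained from $P$ by the linear change of variables $x\mapsto Ax$. *)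

From HB Require Import structures.
From mathcomp Require Import all_boot all_order all_algebra.
From mathcomp Require Import mpoly.
Set Implicit Arguments. Unset Strict Implicit. Unset Printing Implicit Defensive.
Import Order.TTheory GRing.Theory Num.Theory.
Local Open Scope ring_scope.

Section Defs.
Variables (K : fieldType) (n : nat).

Definition lin_forms (A : 'M[K]_n) : n.-tuple {mpoly K[n]} :=
  [tuple \sum_(j < n) A i j *: 'X_j | i < n].

Definition act (A : 'M[K]_n) (P : {mpoly K[n]}) : {mpoly K[n]} :=
  P \mPo lin_forms A.

Definition prod_monomial (alpha : nat) : {mpoly K[n]} :=
  \prod_(i < n) 'X_i ^+ alpha.

Definition lie_alg (P : {mpoly K[n]}) (A : 'M[K]_n) : Prop :=
  \sum_(i < n) \sum_(j < n) A i j *: ('X_j * mderiv i P) = 0.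

End Defs.
Arguments prod_monomial {K} n alpha.

(* The Lie algebra transforms by conjugation under a linear change of
   variables: A lies in g_{P(Qx)} iff Q A Q^-1 lies in g_P.  For
   m = (x_1...x_n)^alpha, the polynomial x_j dm/dx_i is alpha times the
   monomial m x_j / x_i, and these monomials are pairwise distinct for i <> j
   and equal to m for i = j; comparing coefficients shows that, in
   characteristic 0, g_m is the space of traceless diagonal matrices.
   Conversely x_i dP/dx_i - x_j dP/dx_j multiplies the coefficient of x^k in P
   by k_i - k_j, so a homogeneous P of degree n alpha whose Lie algebra
   contains the traceless diagonal matrices is supported on the exponent
   (alpha, ..., alpha), i.e. is a multiple of m.
   Under (i), conjugating the basis E_ii - E_nn (i < n) of the traceless
   diagonal matrices gives the basis required by (ii).  Under (ii), the
   commuting diagonalizable B_i are simultaneously diagonalized by some P; the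
   n-1 independent traceless diagonal matrices P B_i P^-1 then span all
   traceless diagonal matrices, so f(P^-1 x) is a multiple of m.  It is a
   nonzero multiple: g_0 contains the identity, of trace n <> 0, while every
   matrix of g_f is traceless. *)

From HB Require Import structures.
From mathcomp Require Import all_boot all_order all_algebra.
From mathcomp Require Import mpoly zify.
Import Order.TTheory GRing.Theory Num.Theory.
Local Open Scope ring_scope.

Set Implicit Arguments. Unset Strict Implicit. Unset Printing Implicit Defensive.

Lemma pchar0_natr_inj (K : fieldType) : [pchar K] =i pred0 ->
  forall a b : nat, a%:R = b%:R :> K -> a = b.
Proof.
move=> /pcharf0P charK0 a b; wlog ab : a b / (a <= b)%N.
  by move=> wlog; case/orP: (leq_total a b) => /wlog // + /esym => /[apply].
rewrite -(subnK ab) natrD -[X in X = _]add0r => /addIr /esym/eqP.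
by rewrite charK0 => /eqP ->.
Qed.

Lemma sum_delta_row_mul (K : fieldType) n (x : 'I_n -> K) i :
  \sum_l (delta_mx 0 i : 'rV[K]_n) 0 l * x l = x i.
Proof.
rewrite (bigD1 i) //= mxE !eqxx mul1r big1 ?addr0 // => l li.
by rewrite mxE (negbTE li) andbF mul0r.
Qed.

Lemma sum_delta_diff_mul (K : fieldType) n (x : 'I_n -> K) i j :
  \sum_l (delta_mx 0 i - delta_mx 0 j : 'rV[K]_n) 0 l * x l = x i - x j.
Proof.
rewrite -!sum_delta_row_mul -sumrB.
by apply: eq_bigr => l _; rewrite !mxE mulrBl.
Qed.

Lemma mxtrace_diag_delta_sub {K : fieldType} n (i j : 'I_n) :
  \tr (diag_mx (delta_mx 0 i - delta_mx 0 j) : 'M[K]_n) = 0.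
Proof.
rewrite mxtrace_diag -[RHS](subrr (1 : K)) -(sum_delta_diff_mul (fun=> 1) i j).
by apply: eq_bigr => l _; rewrite mulr1.
Qed.

Section SpanMap.
Variables (K : fieldType) (vT wT : vectType K) (f : {linear vT -> wT}).

Lemma memv_span_map (X : seq vT) v : (v \in <<X>> -> f v \in <<map f X>>)%VS.
Proof. by move=> Xv; rewrite -(eq_map (lfunE f)) -limg_span -lfunE memv_img. Qed.

Lemma free_map_inj (X : seq vT) : injective f -> free (map f X) = free X.
Proof.
move=> f_inj; have /eqP f0 : lker (linfun f) == 0%VS.
  by apply/lker0P => u v; rewrite !lfunE; apply: f_inj.
by rewrite /free size_map -(eq_map (lfunE f)) -limg_span limg_dim_eq // f0 capv0.
Qed.

End SpanMap.

Lemma conjmx_is_linear (K : fieldType) m n (V : 'M[K]_(m, n)) : linear (conjmx V).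
Proof. by move=> c A B; rewrite /conjmx linearP mulmxDl -scalemxAl. Qed.

HB.instance Definition _ (K : fieldType) m n (V : 'M[K]_(m, n)) :=
  GRing.isLinear.Build K 'M[K]_n 'M[K]_m _ (conjmx V) (conjmx_is_linear V).

Lemma mxtrace_conjmx (K : fieldType) n (V M : 'M[K]_n) :
  V \in unitmx -> \tr (conjmx V M) = \tr M.
Proof. by move=> Vu; rewrite conjumx // mxtrace_mulC mulmxA mulVmx // mul1mx. Qed.

Lemma is_diag_mx_comm (K : fieldType) n (A B : 'M[K]_n) :
  is_diag_mx A -> is_diag_mx B -> A *m B = B *m A.
Proof. by move=> /diag_mxP [d ->] /diag_mxP [e ->]; exact: diag_mxC. Qed.

Lemma mxtrace_span (K : fieldType) n m (X : m.-tuple 'M[K]_n) M :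
  (forall i, \tr (tnth X i) = 0) -> (M \in <<X>>)%VS -> \tr M = 0.
Proof.
move=> X0 /coord_span ->; rewrite raddf_sum big1 // => i _.
by rewrite /= mxtraceZ -tnth_nth X0 mulr0.
Qed.

Section TracelessDiagonal.
Variables (K : fieldType) (n' : nat).
Local Notation n := n'.+1.

Let w (i : 'I_n') : 'I_n := widen_ord (leqnSn n') i.

Definition diag_tr0_basis : n'.-tuple 'M[K]_n :=
  [tuple diag_mx (delta_mx 0 (w i) - delta_mx 0 ord_max) | i < n'].

Lemma diag_tr0_basis_diag i : is_diag_mx (tnth diag_tr0_basis i).
Proof. by rewrite tnth_mktuple diag_mx_is_diag. Qed.

Lemma mxtrace_diag_tr0_basis i : \tr (tnth diag_tr0_basis i) = 0.
Proof. by rewrite tnth_mktuple mxtrace_diag_delta_sub. Qed.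

Lemma diag_tr0_in_basis M :
  is_diag_mx M -> \tr M = 0 -> (M \in <<diag_tr0_basis>>)%VS.
Proof.
move=> /diag_mxP [d ->]; rewrite mxtrace_diag big_ord_recr /= => /eqP.
rewrite addrC addr_eq0 => /eqP d_last.
have -> : d = \sum_i d 0 (w i) *: (delta_mx 0 (w i) - delta_mx 0 ord_max).
  rewrite [LHS]row_sum_delta big_ord_recr /= d_last scaleNr scaler_suml -sumrB.
  by apply: eq_bigr => i _; rewrite scalerBr.
rewrite linear_sum rpred_sum // => i _; rewrite linearZ rpredZ // memv_span //.
by apply: map_f; rewrite mem_enum.
Qed.

Lemma diag_tr0_basis_entry i j : tnth diag_tr0_basis j (w i) (w i) = (i == j)%:R.
Proof.
have w_last k : (w k == ord_max) = false by rewrite -val_eqE /= ltn_eqF.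
by rewrite tnth_mktuple !mxE !eqxx w_last subr0 mulr1n -!val_eqE.
Qed.

Lemma free_diag_tr0_basis : free diag_tr0_basis.
Proof.
apply/freeP => k k0 i; have /matrixP/(_ (w i) (w i)) := k0.
rewrite summxE mxE; under eq_bigr do rewrite mxE -tnth_nth diag_tr0_basis_entry.
rewrite (bigD1 i) //= eqxx mulr1 big1 ?addr0 // => j ji.
by rewrite eq_sym (negbTE ji) mulr0.
Qed.

Lemma diag_tr0_in_free_span (C : n'.-tuple 'M[K]_n) M :
  free C -> (forall i, is_diag_mx (tnth C i) /\ \tr (tnth C i) = 0) ->
  is_diag_mx M -> \tr M = 0 -> (M \in <<C>>)%VS.
Proof.
move=> C_free C_diag M_diag M_tr0.
suff -> : <<C>>%VS = <<diag_tr0_basis>>%VS by exact: diag_tr0_in_basis.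
apply/eqP; rewrite eqEdim; apply/andP; split.
  apply/span_subvP => _ /tnthP [i ->].
  by have [] := C_diag i; exact: diag_tr0_in_basis.
by rewrite (eqP C_free) (eqP free_diag_tr0_basis) !size_tuple.
Qed.

End TracelessDiagonal.

Section LieDerivation.
Variables (K : fieldType) (n : nat).
Implicit Types (A B : 'M[K]_n) (P R : {mpoly K[n]}).

Definition lie_der A P : {mpoly K[n]} :=
  \sum_(i < n) \sum_(j < n) A i j *: ('X_j * P^`M(i)).

Lemma tnth_lin_forms A i : tnth (lin_forms A) i = \sum_j A i j *: 'X_j.
Proof. exact: tnth_mktuple. Qed.

Lemma lie_derE A P : lie_der A P = \sum_i tnth (lin_forms A) i * P^`M(i).
Proof.
apply: eq_bigr => i _; rewrite tnth_lin_forms mulr_suml.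
by apply: eq_bigr => j _; rewrite scalerAl.
Qed.

Lemma lie_der_is_linear A : linear (lie_der A).
Proof.
move=> c P R; rewrite !lie_derE scaler_sumr -big_split /=.
by apply: eq_bigr => i _; rewrite linearP mulrDr scalerAr.
Qed.

HB.instance Definition _ A := GRing.isLinear.Build K {mpoly K[n]} {mpoly K[n]}
  _ (lie_der A) (lie_der_is_linear A).

Lemma lie_derM A P R : lie_der A (P * R) = lie_der A P * R + P * lie_der A R.
Proof.
rewrite !lie_derE mulr_suml mulr_sumr -big_split /=; apply: eq_bigr => i _.
rewrite mderivM mulrDr; congr (_ + _); [exact: mulrA | exact: mulrCA].
Qed.

Lemma lie_der1 A : lie_der A 1 = 0.
Proof. by rewrite lie_derE big1 // => i _; rewrite -mpolyC1 mderivC mulr0. Qed.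

Lemma mderivXU (i k : 'I_n) : ('X_k : {mpoly K[n]})^`M(i) = (k == i)%:R.
Proof.
rewrite mderivX mnm1E; case: eqP => [->|_]; last by rewrite scale0r.
by rewrite -[X in (X - _)%MM]add0m addmK mpolyX0 scale1r.
Qed.

Lemma lie_der_X A k : lie_der A 'X_k = tnth (lin_forms A) k.
Proof.
rewrite lie_derE (bigD1 k) //= big1 ?addr0 => [|i ik].
  by rewrite mderivXU eqxx mulr1.
by rewrite mderivXU eq_sym (negbTE ik) mulr0.
Qed.

Lemma lin_forms_mulmx A B k :
  \sum_j B k j *: tnth (lin_forms A) j = tnth (lin_forms (B *m A)) k.
Proof.
rewrite tnth_lin_forms; under eq_bigr do rewrite tnth_lin_forms scaler_sumr.
rewrite exchange_big /=; apply: eq_bigr => l _.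
by rewrite mxE scaler_suml; apply: eq_bigr => j _; rewrite scalerA.
Qed.

Lemma lie_der_lin_form A B k :
  lie_der A (tnth (lin_forms B) k) = tnth (lin_forms (B *m A)) k.
Proof.
rewrite -lin_forms_mulmx {1}tnth_lin_forms linear_sum.
by apply: eq_bigr => j _; rewrite linearZ /= lie_der_X.
Qed.

Lemma lie_derDl A B P : lie_der (A + B) P = lie_der A P + lie_der B P.
Proof.
rewrite -big_split; apply: eq_bigr => i _; rewrite -big_split.
by apply: eq_bigr => j _; rewrite mxE scalerDl.
Qed.

Lemma lie_derZl c A P : lie_der (c *: A) P = c *: lie_der A P.
Proof.
rewrite scaler_sumr; apply: eq_bigr => i _; rewrite scaler_sumr.
by apply: eq_bigr => j _; rewrite mxE scalerA.
Qed.

Lemma lie_alg_span P m (X : m.-tuple 'M[K]_n) A :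
  (forall i, lie_alg P (tnth X i)) -> (A \in <<X>>)%VS -> lie_alg P A.
Proof.
move=> XP /coord_span ->; rewrite /lie_alg -/(lie_der _ P).
elim/big_rec: _ => [|i M _ PM]; first by rewrite -(scale0r 0) lie_derZl scale0r.
rewrite lie_derDl lie_derZl PM -(tnth_nth 0).
by rewrite (XP i : lie_der _ P = 0) scaler0 addr0.
Qed.

End LieDerivation.

Section LinearChange.
Variables (K : fieldType) (n : nat).
Implicit Types (A B Q : 'M[K]_n) (P R : {mpoly K[n]}).

HB.instance Definition _ Q :=
  GRing.LRMorphism.copy (act Q) (comp_mpoly (lin_forms Q)).

Lemma mpoly_alg_ind (Phi : {mpoly K[n]} -> Prop) :
  Phi 1 -> (forall i, Phi 'X_i) ->
  (forall P R, Phi P -> Phi R -> Phi (P + R)) ->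
  (forall P R, Phi P -> Phi R -> Phi (P * R)) ->
  (forall c P, Phi P -> Phi (c *: P)) -> forall P, Phi P.
Proof.
move=> Phi1 PhiX PhiD PhiM PhiZ.
have Phi0 : Phi 0 by rewrite -(scale0r 1); apply: PhiZ.
have PhiXm m : Phi 'X_[m].
  rewrite mpolyXE_id; apply: big_ind => // i _.
  by elim: (m i) => [|k IHk]; rewrite ?expr0 // exprS; apply: PhiM.
by move=> P; rewrite (mpolyE P); apply: big_ind => // m _; apply: PhiZ.
Qed.

Lemma act_X Q k : act Q 'X_k = tnth (lin_forms Q) k.
Proof. by rewrite /act comp_mpolyXU -tnth_nth. Qed.

Lemma act_lin_form Q B k :
  act Q (tnth (lin_forms B) k) = tnth (lin_forms (B *m Q)) k.
Proof.
rewrite -lin_forms_mulmx {1}tnth_lin_forms linear_sum.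
by apply: eq_bigr => j _; rewrite linearZ /= act_X.
Qed.

Lemma act_mulmx A B P : act A (act B P) = act (B *m A) P.
Proof.
elim/mpoly_alg_ind: P => [|i|P R IHP IHR|P R IHP IHR|c P IHP].
- by rewrite !rmorph1.
- by rewrite !act_X act_lin_form.
- by rewrite !rmorphD /= IHP IHR.
- by rewrite !rmorphM /= IHP IHR.
- by rewrite !linearZ /= IHP.
Qed.

Lemma act1mx P : act 1%:M P = P.
Proof.
rewrite -[RHS]comp_mpoly_id; congr comp_mpoly; apply: eq_from_tnth => i.
rewrite tnth_lin_forms tnth_mktuple (bigD1 i) //= big1 ?addr0 => [|j ji].
  by rewrite mxE eqxx scale1r.
by rewrite mxE eq_sym (negbTE ji) scale0r.
Qed.

Lemma actK Q : Q \in unitmx -> cancel (act Q) (act (invmx Q)).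
Proof. by move=> Qu P; rewrite act_mulmx mulmxV // act1mx. Qed.

Lemma actVK Q : Q \in unitmx -> cancel (act (invmx Q)) (act Q).
Proof. by move=> Qu P; rewrite act_mulmx mulVmx // act1mx. Qed.

Lemma lin_forms_homog Q i : tnth (lin_forms Q) i \is 1.-homog.
Proof.
rewrite tnth_lin_forms rpred_sum // => j _.
by rewrite rpredZ // dhomogX; apply/eqP/mdeg1.
Qed.

Lemma act_homog Q P d : P \is d.-homog -> act Q P \is d.-homog.
Proof.
move=> /dhomogP Pd; rewrite /act comp_mpolyEX big_seq; apply: rpred_sum => m mP.
rewrite rpredZ // comp_mpolyX.
have <- : mdeg m = d by exact: Pd.
rewrite mdegE; apply: (big_ind2 (fun (R : {mpoly K[n]}) d => R \is d.-homog)).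
- exact: dhomog1.
- by move=> ? ? ? ? ? ?; apply: dhomogM.
by move=> i _; have := dhomogMn (m i) (lin_forms_homog Q i); rewrite mul1n.
Qed.

Lemma lie_der_act A A' Q P : Q *m A = A' *m Q ->
  lie_der A (act Q P) = act Q (lie_der A' P).
Proof.
move=> QA; elim/mpoly_alg_ind: P => [|i|P R IHP IHR|P R IHP IHR|c P IHP].
- by rewrite rmorph1 !lie_der1 raddf0.
- by rewrite act_X lie_der_lin_form lie_der_X act_lin_form QA.
- by rewrite !raddfD /= IHP IHR.
- by rewrite rmorphM !lie_derM IHP IHR raddfD /= !rmorphM.
- by rewrite !linearZ /= IHP.
Qed.

Lemma lie_alg_act Q P M : Q \in unitmx ->
  lie_alg (act Q P) M <-> lie_alg P (conjmx Q M).
Proof.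
move=> Qu; rewrite /lie_alg -!/(lie_der _ _).
rewrite (lie_der_act _ (_ : Q *m M = conjmx Q M *m Q)); last first.
  by rewrite conjumx // mulmxKV.
split=> [|->]; last exact: raddf0.
by move/eqP; rewrite raddf_eq0 => [/eqP//|]; exact: can_inj (actK Qu).
Qed.

Lemma lie_algZ c P A : c != 0 -> lie_alg (c *: P) A <-> lie_alg P A.
Proof.
move=> c0; rewrite /lie_alg -!/(lie_der _ _) linearZ /=.
by split=> [/eqP|->]; rewrite ?scaler0 // scaler_eq0 (negbTE c0) => /eqP.
Qed.

End LinearChange.

Section Euler.
Variables (K : fieldType) (n : nat).
Implicit Types (P : {mpoly K[n]}) (d : 'rV[K]_n).

Lemma mulX_mderivX i j (m : 'X_{1..n}) :
  'X_j * ('X_[m] : {mpoly K[n]})^`M(i) = (m i)%:R *: 'X_[U_(j) + (m - U_(i))].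
Proof. by rewrite mderivX -scalerAr -mpolyXD. Qed.

Lemma euler_mderivX i (m : 'X_{1..n}) :
  'X_i * ('X_[m] : {mpoly K[n]})^`M(i) = (m i)%:R *: 'X_[m].
Proof.
rewrite mulX_mderivX; case: (posnP (m i)) => [->|mi]; first by rewrite !scale0r.
by rewrite addmC submK //; apply/mnm_lepP => j; rewrite mnm1E; case: eqP => [<-|].
Qed.

Lemma mcoeff_euler i P k : ('X_i * P^`M(i))@_k = (k i)%:R * P@_k.
Proof.
elim/mpolyind: P => [|c m P _ _ IHP].
  by rewrite mderiv0 mulr0 !mcoeff0 mulr0.
rewrite mderivD mulrDr !mcoeffD IHP mulrDr mderivZ -scalerAr euler_mderivX.
rewrite scalerA !mcoeffZ !mcoeffX.
by case: eqP => [->|]; rewrite ?mulr0 // !mulr1 mulrC.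
Qed.

Lemma lie_der_diag d P : lie_der (diag_mx d) P = \sum_i d 0 i *: ('X_i * P^`M(i)).
Proof.
apply: eq_bigr => i _; rewrite (bigD1 i) //= big1 ?addr0 => [|j ji].
  by rewrite mxE eqxx mulr1n.
by rewrite mxE eq_sym (negbTE ji) mulr0n scale0r.
Qed.

Lemma mcoeff_lie_der_diag d P k :
  (lie_der (diag_mx d) P)@_k = (\sum_i d 0 i * (k i)%:R) * P@_k.
Proof.
rewrite lie_der_diag raddf_sum mulr_suml; apply: eq_bigr => i _.
by rewrite /= mcoeffZ mcoeff_euler mulrA.
Qed.

End Euler.

Section ProdMonomial.
Variables (K : fieldType) (n alpha : nat).
Hypotheses (charK0 : [pchar K] =i pred0) (alpha_pos : (0 < alpha)%N).
Implicit Types (A : 'M[K]_n) (P : {mpoly K[n]}).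

Let mu := [multinom alpha | i < n].
Let nu i j := (U_(j) + (mu - U_(i)))%MM.

Lemma prod_monomialE : prod_monomial n alpha = 'X_[mu] :> {mpoly K[n]}.
Proof. by rewrite mpolyXE_id; apply: eq_bigr => i _; rewrite mnmE. Qed.

Lemma prod_monomial_neq0 : prod_monomial n alpha != 0 :> {mpoly K[n]}.
Proof.
rewrite prod_monomialE; apply/eqP => /(congr1 (mcoeff mu)).
by rewrite mcoeffX eqxx mcoeff0 => /eqP; rewrite oner_eq0.
Qed.

Let nuE i j l : nu i j l = ((j == l) + (alpha - (i == l)))%N.
Proof. by rewrite mnmDE mnmBE !mnm1E mnmE. Qed.

Let nu_eq_mu i j : (nu i j == mu) = (i == j).
Proof.
apply/eqP/eqP => [/mnmP/(_ i)|<-]; last first.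
  by apply/mnmP => l; rewrite nuE mnmE; case: (i == l) => /=; lia.
by rewrite nuE mnmE eqxx; case: eqP => //= _; lia.
Qed.

Let eq_nu_offdiag i j k l : k != l -> (nu i j == nu k l) = (i == k) && (j == l).
Proof.
move=> kl; apply/idP/idP => [/eqP/mnmP nu_ij|/andP[/eqP-> /eqP->] //].
have := nu_ij l; have := nu_ij k.
rewrite !nuE !eqxx (negbTE kl) (eq_sym l) (negbTE kl).
by case: (i == k); case: (j == l); case: (i == l); case: (j == k) => //=; lia.
Qed.

Lemma mcoeff_lie_der_prod_monomial A e :
  (lie_der A (prod_monomial n alpha))@_e
    = alpha%:R * \sum_i \sum_j A i j * (nu i j == e)%:R.
Proof.
rewrite prod_monomialE raddf_sum mulr_sumr; apply: eq_bigr => i _.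
rewrite raddf_sum mulr_sumr; apply: eq_bigr => j _.
by rewrite /= mulX_mderivX mnmE !mcoeffZ mcoeffX mulrCA.
Qed.

Lemma lie_alg_prod_monomial A :
  lie_alg (prod_monomial n alpha) A <-> is_diag_mx A /\ \tr A = 0.
Proof.
have alpha_neq0 : alpha%:R != 0 :> K by move/pcharf0P: charK0 => ->; rewrite -lt0n.
split=> [A_m | [/diag_mxP [d ->]]].
  have coef0 e : \sum_i \sum_j A i j * (nu i j == e)%:R = 0.
    have := congr1 (mcoeff e) (A_m : lie_der A _ = 0).
    rewrite mcoeff_lie_der_prod_monomial mcoeff0 => /eqP.
    by rewrite mulf_eq0 (negbTE alpha_neq0) => /eqP.
  split.
    apply/is_diag_mxP => k l kl; have {}kl : k != l by apply: contraNneq kl => ->.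
    rewrite -(coef0 (nu k l)) (bigD1 k) //= [X in _ + X]big1 ?addr0 => [|i ik];
      last first.
      by rewrite big1 // => j _; rewrite eq_nu_offdiag // (negbTE ik) mulr0.
    rewrite (bigD1 l) //= big1 ?addr0 => [|j jl].
      by rewrite eq_nu_offdiag // !eqxx mulr1.
    by rewrite eq_nu_offdiag // (negbTE jl) andbF mulr0.
  rewrite -(coef0 mu); apply: eq_bigr => i _.
  rewrite (bigD1 i) //= nu_eq_mu eqxx mulr1 big1 ?addr0 // => j ji.
  by rewrite nu_eq_mu eq_sym (negbTE ji) mulr0.
move=> trd; rewrite /lie_alg -/(lie_der _ _) lie_der_diag prod_monomialE.
under eq_bigr do rewrite euler_mderivX mnmE scalerA.
by rewrite -scaler_suml -mulr_suml -mxtrace_diag trd mul0r scale0r.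
Qed.

Lemma homog_lie_alg_diag_multiple P : P \is (n * alpha)%N.-homog ->
  (forall A, is_diag_mx A -> \tr A = 0 -> lie_alg P A) ->
  P = P@_mu *: prod_monomial n alpha.
Proof.
move=> Phom Pdiag; rewrite prod_monomialE; apply/mpolyP => k.
rewrite mcoeffZ mcoeffX; have [<-|k_mu] := eqVneq mu k; first by rewrite mulr1.
rewrite mulr0; apply: contraNeq k_mu => Pk.
have k_const i j : k i = k j.
  have := Pdiag _ (diag_mx_is_diag _) (mxtrace_diag_delta_sub i j).
  move=> /(congr1 (mcoeff k)).
  rewrite mcoeff_lie_der_diag sum_delta_diff_mul mcoeff0 => /eqP.
  rewrite mulf_eq0 (negbTE Pk) orbF subr_eq0 => /eqP; exact: pchar0_natr_inj.
have : mdeg k = (n * alpha)%N by apply: (dhomog_mf Phom); rewrite mcoeff_msupp.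
move=> deg_k; apply/eqP/mnmP => i; move: deg_k.
rewrite mnmE mdegE (eq_bigr (fun=> k i)) => [|j _]; last exact: k_const.
rewrite sum_nat_const card_ord => /eqP; rewrite eqn_mul2l.
by case/orP => [/eqP n0|/eqP ->//]; have := ltn_ord i; rewrite {2}n0.
Qed.

End ProdMonomial.

Definition diagonalizable_lie_basis (K : fieldType) n (f : {mpoly K[n]})
    (B : n.-1.-tuple 'M[K]_n) : Prop :=
  [/\ (forall i, lie_alg f (tnth B i)), free B &
      (forall A, lie_alg f A -> (A \in <<B>>)%VS)] /\
  [/\ (forall i, diagonalizable (tnth B i)), (forall i, \tr (tnth B i) = 0) &
      (forall i j, tnth B i *m tnth B j = tnth B j *m tnth B i)].

Section Equivalence.
Variables (K : fieldType) (n' alpha : nat).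
Hypotheses (charK0 : [pchar K] =i pred0) (alpha_pos : (0 < alpha)%N).
Local Notation n := n'.+1.
Local Notation m := (prod_monomial n alpha : {mpoly K[n]}).
Variables (f : {mpoly K[n]}).
Hypothesis f_homog : f \is (n * alpha)%N.-homog.

Let trace1_neq0 : \tr (1%:M : 'M[K]_n) != 0.
Proof. by rewrite mxtrace1; move/pcharf0P: charK0 => ->. Qed.

Let neq0_of_lie_alg_traceless :
  (forall A, lie_alg f A -> \tr A = 0) -> f != 0.
Proof.
move=> f_tr; apply: contraNneq trace1_neq0 => f0; apply/eqP/f_tr.
by rewrite f0; exact: (raddf0 (lie_der _)).
Qed.

Lemma lie_alg_equiv_monomial A c M : A \in unitmx -> c != 0 ->
  lie_alg (c *: act A m) M <-> is_diag_mx (conjmx A M) /\ \tr M = 0.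
Proof.
move=> Au c0; rewrite lie_algZ // lie_alg_act // lie_alg_prod_monomial //.
by rewrite mxtrace_conjmx.
Qed.

Lemma equiv_monomial_lie_basis :
  (exists A c, A \in unitmx /\ act A m = c *: f) ->
  exists B, diagonalizable_lie_basis f B.
Proof.
case=> A [c [Au Am]].
have c0 : c != 0.
  apply: contra_eq_neq Am => ->; rewrite scale0r.
  by rewrite raddf_eq0 ?prod_monomial_neq0 //; exact: can_inj (actK Au).
have gf M : lie_alg f M <-> is_diag_mx (conjmx A M) /\ \tr M = 0.
  by rewrite -(lie_alg_equiv_monomial _ Au (invr_neq0 c0)) Am scalerA mulVf // scale1r.
pose B := map_tuple (conjmx (invmx A)) (diag_tr0_basis K n').
have conjB i : conjmx A (tnth B i) = tnth (diag_tr0_basis K n') i.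
  by rewrite tnth_map conjmxVK.
have trB i : \tr (tnth B i) = 0.
  by rewrite -(mxtrace_conjmx _ Au) conjB mxtrace_diag_tr0_basis.
exists B; split; split=> //.
- by move=> i; apply/gf; rewrite conjB diag_tr0_basis_diag.
- rewrite free_map_inj ?free_diag_tr0_basis //.
  by apply: (can_inj (g := conjmx A)) => M; exact: conjmxVK.
- move=> M /gf [M_diag M_tr]; rewrite -[M](conjmxK M Au) memv_span_map //.
  by rewrite diag_tr0_in_basis // mxtrace_conjmx.
- by move=> i; exists A; rewrite // /similar_to conjB diag_tr0_basis_diag.
move=> i j; rewrite !tnth_map -!conjmxM ?inE ?stablemx_unit ?unitmx_inv //.
by rewrite is_diag_mx_comm ?diag_tr0_basis_diag.
Qed.

Lemma lie_basis_equiv_monomial :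
  (exists B, diagonalizable_lie_basis f B) ->
  exists A c, A \in unitmx /\ act A m = c *: f.
Proof.
case=> B [[Bf B_free f_B] [B_diag B_tr B_comm]].
have f0 : f != 0 by apply: neq0_of_lie_alg_traceless => A /f_B; exact: mxtrace_span.
have [P Pu P_diag] : codiagonalizable B.
  apply/codiagonalizableP; split=> [X Y /tnthP [i ->] /tnthP [j ->]|X /tnthP [i ->]].
    exact: B_comm.
  exact: B_diag.
pose C := map_tuple (conjmx P) B.
have C_free : free C.
  rewrite free_map_inj //.
  by apply: (can_inj (g := conjmx (invmx P))) => M; exact: conjmxK.
have C_diag i : is_diag_mx (tnth C i) /\ \tr (tnth C i) = 0.
  rewrite tnth_map mxtrace_conjmx // B_tr; split=> //.
  exact: (allP P_diag _ (mem_tnth i B)).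
have f'_diag A : is_diag_mx A -> \tr A = 0 -> lie_alg (act (invmx P) f) A.
  move=> A_diag A_tr; rewrite lie_alg_act ?unitmx_inv //; apply: (lie_alg_span Bf).
  have := diag_tr0_in_free_span C_free C_diag A_diag A_tr.
  move=> /(memv_span_map (conjmx (invmx P))).
  by rewrite -map_comp (eq_map (fun M => conjmxK M Pu)) map_id.
have f'E := homog_lie_alg_diag_multiple charK0 (act_homog _ f_homog) f'_diag.
set c := _@__ in f'E.
have fE : f = c *: act P m by rewrite -linearZ /= -f'E actVK.
have c0 : c != 0 by apply: contra_neq f0 => c0; rewrite fE c0 scale0r.
by exists P, c^-1; split=> //; rewrite fE scalerA mulVf // scale1r.
Qed.

Lemma monomial_multiple_lie_alg :
  (exists c, c != 0 /\ f = c *: m) <->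
  (forall A, lie_alg f A <-> is_diag_mx A /\ \tr A = 0).
Proof.
split=> [[c [c0 ->]] A|f_diag]; first by rewrite lie_algZ // lie_alg_prod_monomial.
have fE := homog_lie_alg_diag_multiple charK0 f_homog
  (fun A A_diag A_tr => proj2 (f_diag A) (conj A_diag A_tr)).
have f0 : f != 0 by apply: neq0_of_lie_alg_traceless => A /f_diag [].
exists f@_[multinom alpha | i < n]; split=> //.
by apply: contra_neq f0 => c0; rewrite fE c0 scale0r.
Qed.

End Equivalence.

Unset Implicit Arguments. Set Strict Implicit. Set Printing Implicit Defensive.

Theorem theorem2 (K : fieldType) (n alpha : nat)
    (charK0 : [pchar K] =i pred0) (n_pos : (0 < n)%N) (alpha_pos : (0 < alpha)%N)
    (f : {mpoly K[n]}) (f_homog : f \is (n * alpha)%N.-homog) :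
  ((exists (A : 'M[K]_n) (c : K),
       A \in unitmx /\ act A (prod_monomial n alpha) = c *: f)
   <->
   (exists B : (n.-1).-tuple 'M[K]_n,
       [/\ (forall i : 'I_n.-1, lie_alg f (tnth B i)),
           free B &
           (forall A : 'M[K]_n, lie_alg f A -> (A \in <<B>>)%VS)] /\
       [/\ (forall i : 'I_n.-1, diagonalizable (tnth B i)),
           (forall i : 'I_n.-1, \tr (tnth B i) = 0) &
           (forall i j : 'I_n.-1, tnth B i *m tnth B j = tnth B j *m tnth B i)]))
  /\
  ((exists c : K, c != 0 /\ f = c *: prod_monomial n alpha)
   <->
   (forall A : 'M[K]_n, lie_alg f A <-> (is_diag_mx A /\ \tr A = 0))).
Proof.
case: n n_pos f f_homog => // n' _ f f_homog.
split; first split.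
- exact: equiv_monomial_lie_basis.
- exact: lie_basis_equiv_monomial.
- exact: monomial_multiple_lie_alg.
Qed.
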